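(* Let $X$ be a compact, Hausdorff, totally disconnected topological group and $G$ a dense subgroup of $X$, acting on $X$ by left multiplication. Let $k$ be a field of characteristic $0$ and $T$ the ring of locally constant functions $X\to k$, with $G$ acting on $T$ via $\alpha$ given by $(\alpha(g)t)(x)=t(g^{-1}x)$. Then the skew group ring $T*_{\alpha}G$ is simple.
   Context: The skew group ring $T*_{\alpha}G$ is the free left $T$-module with basis $G$ (elements are finite sums $\sum t_g g$, $t_g\in T$), with multiplication determined by those of $T$ and $G$ and the rule $g t=\alpha(g)(t)\, g$ for $g\in G$, $t\in T$, extended linearly. *)

From HB Require Import structures.
From mathcomp Require Import all_boot all_order all_algebra.
From mathcomp Require Import all_classical all_reals all_analysis.
Set Implicit Arguments. Unset Strict Implicit. Unset Printing Implicit Defensive.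
Import Order.TTheory GRing.Theory Num.Theory.
Local Open Scope classical_set_scope.
Local Open Scope ring_scope.

Section Defs.
Variable X : topologicalType.
Variables (mul : X -> X -> X) (inv : X -> X) (one : X).

Definition is_topological_group : Prop :=
  [/\ (forall x y z, mul x (mul y z) = mul (mul x y) z),
      (forall x, mul one x = x /\ mul x one = x),
      (forall x, mul (inv x) x = one /\ mul x (inv x) = one),
      continuous (fun p : X * X => mul p.1 p.2) &
      continuous inv].

Definition is_subgroup (G : set X) : Prop :=
  [/\ G one, (forall x y, G x -> G y -> G (mul x y)) & (forall x, G x -> G (inv x))].

Variable k : fieldType.

Definition locally_constant (t : X -> k) : Prop :=
  forall x, \forall y \near x, t y = t x.

Definition alpha (g : X) (t : X -> k) : X -> k := fun x => t (mul (inv g) x).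

(* Elements of the skew group ring T *_alpha G: an element  sum_g t_g g
   is represented by its coefficient function a : X -> (X -> k), g |-> t_g,
   required to take values in T, vanish outside G and have finite support. *)
Definition skew_elt (G : set X) (a : X -> X -> k) : Prop :=
  [/\ (forall g, locally_constant (a g)),
      (forall g, ~ G g -> a g = (fun _ => 0)) &
      finite_set [set g | a g <> (fun _ => 0)]].

Definition skew_zero : X -> X -> k := fun _ _ => 0.
Definition skew_one : X -> X -> k := fun g _ => if g == one then 1 else 0.
Definition skew_add (a b : X -> X -> k) : X -> X -> k := fun g x => a g x + b g x.
Definition skew_opp (a : X -> X -> k) : X -> X -> k := fun g x => - a g x.

(* Multiplication determined by  (t g)(s h) = t alpha(g)(s) (g h):
   coefficient at h of a * b is  sum_{g in G} a_g * alpha(g)(b_{g^-1 h}). *)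
Definition skew_mul (G : set X) (a b : X -> X -> k) : X -> X -> k :=
  fun h x => \sum_(g \in G) (a g x * alpha g (b (mul (inv g) h)) x).

Definition skew_ideal (G : set X) (I : set (X -> X -> k)) : Prop :=
  [/\ I `<=` skew_elt G,
      I skew_zero,
      (forall a b, I a -> I b -> I (skew_add a b)),
      (forall a, I a -> I (skew_opp a)) &
      (forall r a, skew_elt G r -> I a -> I (skew_mul G r a) /\ I (skew_mul G a r))].

Definition skew_simple (G : set X) : Prop :=
  skew_one <> skew_zero /\
  forall I, skew_ideal G I -> I = [set skew_zero] \/ I = skew_elt G.

End Defs.

From Pilot Require Import Defs.
From HB Require Import structures.
From mathcomp Require Import all_boot all_order all_algebra.
From mathcomp Require Import all_classical all_reals all_analysis.
Set Implicit Arguments. Unset Strict Implicit. Unset Printing Implicit Defensive.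
Import Order.TTheory GRing.Theory Num.Theory.
Local Open Scope classical_set_scope.
Local Open Scope ring_scope.

(* A compact Hausdorff totally disconnected space is zero-dimensional: the
   intersection of the clopen neighbourhoods of a point is connected, hence a
   singleton.  Let I be a nonzero ideal of T *_alpha G.  Multiplying an element
   b of I by the indicator 1_U of a clopen set U on either side and subtracting
   kills one coefficient of b while keeping another one alive, so shrinking
   supports yields a nonzero t.1 in I.  The functions t with t.1 in I form an
   ideal of T stable under alpha(G); as G is dense, they have no common zero,
   and by compactness one of them vanishes nowhere, so it is invertible in T
   and 1 lies in I. *)

Section compact_zero_dimensional.
Context {T : topologicalType}.

Lemma compact_directed_bigcap0 (Z : set (set T)) :
  compact [set: T] -> (forall A, Z A -> closed A) -> Z !=set0 ->
  (forall A B, Z A -> Z B -> exists2 C, Z C & C `<=` A `&` B) ->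
  \bigcap_(A in Z) A = set0 -> Z set0.
Proof.
move=> cT clZ [A0 ZA0] dirZ Z0; apply: contrapT => nZ0.
pose F := filter_from Z id.
have FF : ProperFilter F.
  apply: filter_from_proper; first exact: filter_from_filter (ex_intro _ A0 ZA0) dirZ.
  by move=> A ZA; apply/set0P/negP => /eqP A_0; apply: nZ0; rewrite -A_0.
have [w [_ Fw]] := cT F FF (filterT : F setT).
have [A ZA nAw] : exists2 A, Z A & ~ A w.
  by apply/existsPNP; rewrite -[X in ~ X]/((\bigcap_(A in Z) A) w) Z0.
suff : A `&` ~` A !=set0 by case=> z [].
apply: Fw; first by exists A.
by apply: open_nbhs_nbhs; split => //; exact: closed_openC (clZ _ ZA).
Qed.

Lemma normal_open_separation : normal_space T ->
  forall A B : set T, closed A -> closed B -> A `&` B = set0 ->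
  exists U V, [/\ open U, open V, A `<=` U, B `<=` V & U `&` V = set0].
Proof.
move=> nT A B clA clB AB0.
have AnB : set_nbhs A (~` B).
  apply/set_nbhsP; exists (~` B); split => //; first exact: closed_openC.
  by move=> a Aa Ba; have : (A `&` B) a by []; rewrite AB0.
have [N NA clNB] := nT A clA _ AnB.
exists N°, (~` closure N); split.
- exact: open_interior.
- exact/closed_openC/closed_closure.
- by move=> a /NA.
- by move=> b Bb clNb; exact: clNB clNb Bb.
- by apply/seteqP; split=> // w [/interior_subset/subset_closure].
Qed.

Lemma clopenI_open_cover (C U V : set T) :
  clopen C -> open U -> open V -> U `&` V = set0 -> C `<=` U `|` V ->
  clopen (C `&` U).
Proof.
move=> [oC clC] oU oV UV0 CUV; split; first exact: openI.
suff -> : C `&` U = C `&` ~` V by apply: closedI => //; exact: open_closedC.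
apply/seteqP; split=> w [Cw UVw]; split => //.
  by move=> Vw; have : (U `&` V) w by []; rewrite UV0.
by case: (CUV w Cw).
Qed.

Definition quasi_component (x : T) : set T :=
  \bigcap_(U in [set U | clopen U /\ U x]) U.

Lemma quasi_component_refl x : quasi_component x x.
Proof. by move=> U []. Qed.

Lemma closed_quasi_component x : closed (quasi_component x).
Proof. by apply: closed_bigI => U [[]]. Qed.

Hypothesis cT : compact [set: T].

Lemma quasi_component_clopen_sub x (W : set T) :
  open W -> quasi_component x `<=` W -> exists C, [/\ clopen C, C x & C `<=` W].
Proof.
move=> oW QW.
pose Z := [set C `&` ~` W | C in [set C | clopen C /\ C x]].
have : Z set0.
  apply: compact_directed_bigcap0 => //.
  - by move=> _ [C [[_ clC] _] <-]; apply: closedI => //; exact: open_closedC.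
  - by exists (setT `&` ~` W), setT => //; split => //; exact: clopenT.
  - move=> _ _ [C [cC Cx] <-] [D [cD Dx] <-].
    exists ((C `&` D) `&` ~` W).
      by exists (C `&` D) => //; split => //; exact: clopenI.
    by move=> w [[Cw Dw] nWw].
  - apply/seteqP; split=> // w ZW.
    have ZWw C : clopen C -> C x -> C w /\ ~ W w.
      by move=> cC Cx; apply: (ZW (C `&` ~` W)); exists C.
    have [_ nWw] := ZWw _ clopenT I.
    by apply/nWw/QW => C [cC Cx]; have [] := ZWw C cC Cx.
case=> C [cC Cx] CW0; exists C; split => // w Cw; apply: contrapT => nWw.
by have : (C `&` ~` W) w by []; rewrite CW0.
Qed.

Lemma quasi_component_sub_setU x (U V : set T) :
  open U -> open V -> U `&` V = set0 -> quasi_component x `<=` U `|` V ->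
  quasi_component x `<=` U \/ quasi_component x `<=` V.
Proof.
move=> oU oV UV0 QUV.
have [C [cC Cx CUV]] := quasi_component_clopen_sub (openU oU oV) QUV.
case: (CUV x Cx) => [Ux|Vx]; [left|right] => q Qq.
  by have [] := Qq _ (conj (clopenI_open_cover cC oU oV UV0 CUV) (conj Cx Ux)).
rewrite setIC in UV0; rewrite setUC in CUV.
by have [] := Qq _ (conj (clopenI_open_cover cC oV oU UV0 CUV) (conj Cx Vx)).
Qed.

Hypothesis hT : hausdorff_space T.

Lemma connected_quasi_component x : connected (quasi_component x).
Proof.
set Q := quasi_component x.
move=> B [z Bz] [W oW BE] [D clD BD].
have clB : closed B by rewrite BD; apply: closedI => //; exact: closed_quasi_component.
have clA : closed (Q `&` ~` W).
  by apply: closedI; [exact: closed_quasi_component | exact: open_closedC].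
have BA0 : B `&` (Q `&` ~` W) = set0.
  by apply/seteqP; split=> // w [+ [_ nWw]]; rewrite BE => -[].
have [U [V [oU oV BU AV UV0]]] :=
  normal_open_separation (compact_normal hT cT) clB clA BA0.
have QUV : Q `<=` U `|` V.
  move=> q Qq; have [Wq|nWq] := pselect (W q); first by left; apply: BU; rewrite BE.
  by right; apply: AV.
case: (quasi_component_sub_setU oU oV UV0 QUV) => [QU|QV]; last first.
  have Qz : Q z by move: Bz; rewrite BE => -[].
  have : (U `&` V) z by split; [exact: BU | exact: QV].
  by rewrite UV0.
apply/seteqP; split=> [w|q Qq]; first by rewrite BE => -[].
rewrite BE; split => //; apply: contrapT => nWq.
have : (U `&` V) q by split; [exact: QU | exact: AV].
by rewrite UV0.
Qed.

Lemma compact_totally_disconnected_zero_dimensional :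
  totally_disconnected [set: T] -> zero_dimensional T.
Proof.
move=> tdT x y /eqP xy; apply: contrapT => nsep.
have Qy : quasi_component x y.
  move=> U [cU Ux]; apply: contrapT => nUy; apply: nsep; by exists U.
have : connected_component [set: T] x y.
  exists (quasi_component x) => //; split => //.
  - exact: quasi_component_refl.
  - exact: connected_quasi_component.
by rewrite tdT // => /esym.
Qed.

End compact_zero_dimensional.

Lemma fsbig_supp1 (I : choiceType) (R : nmodType) (A : set I) (i0 : I) (F : I -> R) :
  A i0 -> (forall i, i <> i0 -> F i = 0) -> \sum_(i \in A) F i = F i0.
Proof.
move=> Ai0 F0; rewrite -(fsbig_widen [set i0] A F) ?fsbig_set1 //.
- by move=> i ->.
- by move=> i [_ /= ni]; exact: F0.
Qed.

Section locally_constant.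
Context {X : topologicalType} {k : fieldType}.
Implicit Types (s t : X -> k).

Lemma locally_constant_cst (c : k) : locally_constant (fun _ : X => c).
Proof. by move=> x; exact: nearW. Qed.

Lemma locally_constant_comp t (f : X -> X) :
  locally_constant t -> continuous f -> locally_constant (fun x => t (f x)).
Proof. by move=> lt cf x; exact: cf (lt (f x)). Qed.

Lemma locally_constant_map2 (op : k -> k -> k) s t :
  locally_constant s -> locally_constant t ->
  locally_constant (fun x => op (s x) (t x)).
Proof. by move=> ls lt x; apply: filterS2 (ls x) (lt x) => y /= -> ->. Qed.

Lemma locally_constant_map (f : k -> k) t :
  locally_constant t -> locally_constant (fun x => f (t x)).
Proof. by move=> lt x; apply: filterS (lt x) => y /= ->. Qed.

Lemma locally_constant_indic (U : set X) :
  clopen U -> locally_constant (\1_U : X -> k).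
Proof.
move=> [oU clU] x; have [Ux|nUx] := pselect (U x).
  have : nbhs x U by exact: open_nbhs_nbhs.
  by apply: filterS => y Uy; rewrite !indicE !mem_set.
have : nbhs x (~` U) by apply: open_nbhs_nbhs; split => //; exact: closed_openC.
by apply: filterS => y nUy; rewrite !indicE !memNset.
Qed.

Lemma closed_locally_constant_fiber t (c : k) :
  locally_constant t -> closed [set x | t x = c].
Proof.
move=> lt; rewrite -[X in closed X]setCK; apply: open_closedC.
rewrite openE => x /= txc; apply: filterS (lt x) => y /= ->; exact: txc.
Qed.

End locally_constant.

Definition skew_support {X : Type} {k : fieldType} (b : X -> X -> k) : set X :=
  [set g | b g <> (fun _ => 0)].

Definition skew_monomial {X : topologicalType} {k : fieldType} (s : X -> k) (g : X) :
  X -> X -> k := fun h x => if h == g then s x else 0.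

Section skew_group_ring.
Variables (X : topologicalType) (mul : X -> X -> X) (inv : X -> X) (one : X).
Variables (G : set X) (k : fieldType).
Hypotheses (tgX : is_topological_group mul inv one) (sgG : is_subgroup mul inv one G).
Implicit Types (s t : X -> k) (b r : X -> X -> k).

Local Notation skew_mul := (skew_mul mul inv G).
Local Notation alpha := (alpha mul inv).
Local Notation skew_elt := (@skew_elt X k G).
Local Notation "s *: g" := (@skew_monomial X k s g).

Let mulA x y z : mul x (mul y z) = mul (mul x y) z.
Proof. by case: tgX. Qed.
Let mul1g x : mul one x = x.
Proof. by case: tgX => _ /(_ x) []. Qed.
Let mulg1 x : mul x one = x.
Proof. by case: tgX => _ /(_ x) []. Qed.
Let mulVg x : mul (inv x) x = one.
Proof. by case: tgX => _ _ /(_ x) []. Qed.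
Let mulgV x : mul x (inv x) = one.
Proof. by case: tgX => _ _ /(_ x) []. Qed.
Let inv1 : inv one = one.
Proof. by rewrite -[inv one]mulg1 mulVg. Qed.
Let mulKg g x : mul (inv g) (mul g x) = x.
Proof. by rewrite mulA mulVg mul1g. Qed.
Let mulKVg g x : mul g (mul (inv g) x) = x.
Proof. by rewrite mulA mulgV mul1g. Qed.
Let invK g : inv (inv g) = g.
Proof. by rewrite -[inv (inv g)]mulg1 -(mulVg g) mulA mulVg mul1g. Qed.
Let mulIg g x y : mul x g = mul y g -> x = y.
Proof. by move=> /(congr1 (mul^~ (inv g))); rewrite -!mulA mulgV !mulg1. Qed.
Let eq_mulVg g h c : (mul (inv g) h == c) = (h == mul g c).
Proof. by apply/eqP/eqP => [<-|->]; rewrite ?mulKVg ?mulKg. Qed.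

Let continuous_mull c : continuous (mul c).
Proof.
move=> x; case: tgX => _ _ _ cmul _.
exact: continuous_comp (cvg_pair (cvg_cst c) cvg_id) (cmul (c, x)).
Qed.
Let continuous_mulr c : continuous (mul^~ c).
Proof.
move=> x; case: tgX => _ _ _ cmul _.
exact: continuous_comp (cvg_pair cvg_id (cvg_cst c)) (cmul (x, c)).
Qed.

Let G1 : G one.
Proof. by case: sgG. Qed.
Let GV g : G g -> G (inv g).
Proof. by case: sgG => _ _; apply. Qed.

Lemma locally_constant_alpha g t : locally_constant t -> locally_constant (alpha g t).
Proof. by move=> lt; exact: locally_constant_comp lt (@continuous_mull (inv g)). Qed.

Lemma skew_elt_monomial s g : G g -> locally_constant s -> skew_elt (s *: g).
Proof.
move=> Gg ls; split.
- by move=> h; rewrite /skew_monomial; case: eqP => _ //; exact: locally_constant_cst.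
- by move=> h nGh; apply/funext => x; rewrite /skew_monomial; case: eqP => // hg; subst.
- apply: (sub_finite_set _ (finite_set1 g)) => h /=; rewrite /skew_monomial.
  by case: eqP => // _ []; apply/funext.
Qed.

Lemma skew_mul_monomiall s g r : G g ->
  skew_mul (s *: g) r = fun h x => s x * r (mul (inv g) h) (mul (inv g) x).
Proof.
move=> Gg; apply/funext => h; apply/funext => x; rewrite /skew_mul (fsbig_supp1 Gg).
  by rewrite /skew_monomial eqxx.
by move=> g' g'g /=; rewrite /skew_monomial; case: eqP => // _; rewrite mul0r.
Qed.

Lemma skew_mul_monomial1r b s : skew_elt b ->
  skew_mul b (s *: one) = fun h x => b h x * s (mul (inv h) x).
Proof.
move=> [_ bG _]; apply/funext => h; apply/funext => x; rewrite /skew_mul.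
have monoE g : g <> h -> b g x * alpha g ((s *: one) (mul (inv g) h)) x = 0.
  move=> gh; rewrite /alpha /skew_monomial eq_mulVg mulg1.
  by case: eqP => [hg|_]; [case: gh | rewrite mulr0].
have [Gh|nGh] := pselect (G h).
  by rewrite (fsbig_supp1 Gh monoE) /alpha /skew_monomial mulVg eqxx.
rewrite fsbig1 => [|g Gg]; first by rewrite bG // mul0r.
by apply: monoE => gh; subst.
Qed.

Lemma skew_mulr1 b : skew_elt b -> skew_mul b ((fun _ => 1) *: one) = b.
Proof.
move=> eb; rewrite skew_mul_monomial1r //.
by apply/funext => h; apply/funext => x; rewrite mulr1.
Qed.

Lemma skew_mul_monomial1 s t :
  skew_mul (s *: one) (t *: one) = (fun x => s x * t x) *: one.
Proof.
rewrite skew_mul_monomiall //; apply/funext => h; apply/funext => x.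
by rewrite /skew_monomial inv1 !mul1g; case: eqP; rewrite ?mulr0.
Qed.

Lemma skew_mul_monomialV t g : G g ->
  skew_mul (t *: g) ((fun _ => 1) *: inv g) = t *: one.
Proof.
move=> Gg; rewrite skew_mul_monomiall //; apply/funext => h; apply/funext => x.
by rewrite /skew_monomial eq_mulVg mulgV; case: eqP; rewrite ?mulr0 ?mulr1.
Qed.

Lemma skew_conj_monomial1 t g : G g ->
  skew_mul (skew_mul ((fun _ => 1) *: g) (t *: one)) ((fun _ => 1) *: inv g) =
  alpha g t *: one.
Proof.
move=> Gg; have -> : skew_mul ((fun _ => 1) *: g) (t *: one) = alpha g t *: g.
  rewrite skew_mul_monomiall //; apply/funext => h; apply/funext => x.
  by rewrite /skew_monomial eq_mulVg mulg1; case: eqP; rewrite ?mul1r ?mulr0.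
exact: skew_mul_monomialV.
Qed.

Lemma skew_add_monomial s t g :
  skew_add (s *: g) (t *: g) = (fun x => s x + t x) *: g.
Proof.
apply/funext => h; apply/funext => x; rewrite /skew_add /skew_monomial.
by case: eqP; rewrite ?addr0.
Qed.

Lemma skew_support_neq0 b : b <> skew_zero k -> skew_support b !=set0.
Proof.
move=> b0; apply/set0P/negP => /eqP supp0; apply: b0; apply/funext => g.
by apply: contrapT => bg; have : skew_support b g by []; rewrite supp0.
Qed.

Section ideal.
Variable I : set (X -> X -> k).
Hypothesis idI : skew_ideal mul inv G I.

Let I_elt b : I b -> skew_elt b.
Proof. by case: idI => + _ _ _ _; apply. Qed.
Let I_add b r : I b -> I r -> I (skew_add b r).
Proof. by case: idI => _ _ + _ _; apply. Qed.
Let I_opp b : I b -> I (skew_opp b).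
Proof. by case: idI => _ _ _ + _; apply. Qed.
Let I_mull r b : skew_elt r -> I b -> I (skew_mul r b).
Proof. by case: idI => _ _ _ _ /[apply] /[apply] -[]. Qed.
Let I_mulr r b : skew_elt r -> I b -> I (skew_mul b r).
Proof. by case: idI => _ _ _ _ /[apply] /[apply] -[]. Qed.

Lemma skew_ideal_drop_support b g0 h x : zero_dimensional X ->
  I b -> h <> g0 -> b h x <> 0 ->
  exists c, [/\ I c, c h x <> 0 & skew_support c `<=` skew_support b `\ g0].
Proof.
move=> zdX Ib hg0 bhx.
have /zdX [U [clU Ug0x nUhx]] : mul (inv g0) x != mul (inv h) x.
  apply/eqP => e; apply: hg0; apply: (@mulIg (mul (inv g0) x)).
  by rewrite {1}e !mulKVg.
pose c := skew_add (skew_mul (alpha g0 \1_U *: one) b)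
                   (skew_opp (skew_mul b (\1_U *: one))).
have cE : c = fun g y => b g y * (\1_U (mul (inv g0) y) - \1_U (mul (inv g) y)).
  rewrite /c skew_mul_monomiall // (skew_mul_monomial1r _ (I_elt Ib)).
  apply/funext => g; apply/funext => y.
  by rewrite /skew_add /skew_opp /alpha inv1 !mul1g mulrBr mulrC.
have lU : locally_constant (\1_U : X -> k) := locally_constant_indic clU.
exists c; split.
- apply: I_add; first by apply: I_mull Ib; exact/skew_elt_monomial/locally_constant_alpha.
  by apply/I_opp/I_mulr => //; exact: skew_elt_monomial.
- by rewrite cE !indicE mem_set // memNset // subr0 mulr1.
- move=> g; rewrite cE => cg; split=> [bg|/= gg0].
    by apply: cg; apply/funext => y; rewrite bg mul0r.
  by apply: cg; apply/funext => y; rewrite gg0 subrr mulr0.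
Qed.

Lemma skew_ideal_monomial1 : zero_dimensional X ->
  (exists2 a, I a & a <> skew_zero k) ->
  exists t, [/\ locally_constant t, t <> (fun _ => 0) & I (t *: one)].
Proof.
move=> zdX [a Ia a0].
suff main n : forall (s : seq X) b, size s = n -> I b -> b <> skew_zero k ->
    skew_support b `<=` [set` s] ->
    exists t, [/\ locally_constant t, t <> (fun _ => 0) & I (t *: one)].
  have [_ _ /finite_seqP[s0 suppE]] := I_elt Ia.
  by apply: (main _ s0 a) => //; rewrite /skew_support suppE.
elim: n => [|n IHn] s b sn Ib b0 bs; have [g0 bg0] := skew_support_neq0 b0.
  by move: (bs g0 bg0); rewrite (size0nil sn).
have [lb bG _] := I_elt Ib.
have Gg0 : G g0 by apply: contrapT => nGg0; apply: bg0; exact: bG.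
have [[h [x [hg0 bhx]]]|bE] := pselect (exists h x, h <> g0 /\ b h x <> 0).
  have [c [Ic chx cb]] := skew_ideal_drop_support zdX Ib hg0 bhx.
  apply: (IHn (rem g0 s) c) => //.
  - by rewrite size_rem ?sn //; exact: bs.
  - by move=> c0; apply: chx; rewrite c0.
  - by move=> g /cb [/bs sg /eqP gg0]; exact: rem_mem.
have {}bE : b = b g0 *: g0.
  apply/funext => h; apply/funext => x; rewrite /skew_monomial.
  case: eqP => [-> //|hg0]; apply: contrapT => bhx; apply: bE; by exists h, x.
exists (b g0); split => //.
have := I_mulr (skew_elt_monomial (GV Gg0) (locally_constant_cst 1)) Ib.
by rewrite {1}bE skew_mul_monomialV.
Qed.

(* The ideal I \cap T of T, where T is embedded in T *_alpha G by t |-> t.1. *)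
Definition base_ideal : set (X -> k) := [set t | locally_constant t /\ I (t *: one)].

Lemma base_idealM s t : locally_constant s -> base_ideal t ->
  base_ideal (fun x => s x * t x).
Proof.
move=> ls [lt It]; split; first exact: locally_constant_map2.
by rewrite -skew_mul_monomial1; apply: I_mull It; exact: skew_elt_monomial.
Qed.

Lemma base_idealD s t : base_ideal s -> base_ideal t -> base_ideal (fun x => s x + t x).
Proof.
move=> [ls Is] [lt It]; split; first exact: locally_constant_map2.
by rewrite -skew_add_monomial; exact: I_add.
Qed.

Lemma base_ideal_alpha g t : G g -> base_ideal t -> base_ideal (alpha g t).
Proof.
move=> Gg [lt It]; split; first exact: locally_constant_alpha.
rewrite -skew_conj_monomial1 //.
apply: I_mulr; first exact: skew_elt_monomial (GV Gg) (locally_constant_cst 1).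
by apply: I_mull It; exact: skew_elt_monomial (locally_constant_cst 1).
Qed.

Lemma base_ideal_zero_setI s t : base_ideal s -> base_ideal t ->
  exists2 u, base_ideal u & forall x, u x = 0 -> s x = 0 /\ t x = 0.
Proof.
move=> Bs Bt; pose z x : k := if s x == 0 then 1 else 0.
exists (fun x => s x + z x * t x) => [|x /=]; rewrite /z.
  apply: base_idealD => //; apply: base_idealM => //.
  exact: (locally_constant_map (fun c => if c == 0 then 1 else 0) (proj1 Bs)).
by case: eqP => [-> | sx0]; rewrite ?mul1r ?add0r ?mul0r ?addr0 // => /sx0.
Qed.

Lemma base_ideal_point t : dense G -> base_ideal t -> t <> (fun _ => 0) ->
  forall y, exists2 u, base_ideal u & u y != 0.
Proof.
move=> dG Bt t0 y.
have [x0 tx0] : exists x0, t x0 != 0.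
  apply: contrapT => /forallNP tx0; apply: t0; apply/funext => x.
  by have /negP/negbNE/eqP := tx0 x.
have [h [thy Gh]] : [set h | t (mul h y) != 0] `&` G !=set0.
  apply: dG; first by exists (mul x0 (inv y)); rewrite /= -mulA mulVg mulg1.
  rewrite openE => h /= thy.
  have := locally_constant_comp (proj1 Bt) (@continuous_mulr y) h.
  by apply: filterS => h' /= ->.
exists (alpha (inv h) t); first exact: base_ideal_alpha (GV Gh) Bt.
by rewrite /Defs.alpha invK.
Qed.

Lemma base_ideal1 : compact [set: X] ->
  (forall y, exists2 u, base_ideal u & u y != 0) -> base_ideal (fun _ => 1).
Proof.
move=> cX Bpt; pose Z := [set [set x | u x = 0] | u in base_ideal].
have : Z set0.
  apply: compact_directed_bigcap0 => //.
  - by move=> _ [u [lu _] <-]; exact: closed_locally_constant_fiber.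
  - by have [u Bu _] := Bpt one; exists [set x | u x = 0], u.
  - move=> _ _ [s Bs <-] [t Bt <-]; have [u Bu ust] := base_ideal_zero_setI Bs Bt.
    by exists [set x | u x = 0]; [exists u | move=> x /ust].
  - apply/seteqP; split=> // y Zy; have [u Bu uy] := Bpt y.
    by move/negP: uy; apply; apply/eqP; apply: (Zy [set x | u x = 0]); exists u.
case=> u Bu u0; have unz x : u x != 0.
  by apply/eqP => ux; have : [set x | u x = 0] x by []; rewrite u0.
have := base_idealM (locally_constant_map GRing.inv (proj1 Bu)) Bu.
by congr base_ideal; apply/funext => x; rewrite mulVf ?unz.
Qed.

Lemma base_ideal1_full : base_ideal (fun _ => 1) -> I = skew_elt.
Proof.
move=> [_ I1]; apply/seteqP; split=> r; first exact: I_elt.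
by move=> er; rewrite -(skew_mulr1 er); exact: I_mull.
Qed.

End ideal.

End skew_group_ring.

Theorem proposition3p6 (X : topologicalType)
  (mul : X -> X -> X) (inv : X -> X) (one : X)
  (G : set X) (k : fieldType) :
  is_topological_group mul inv one ->
  compact [set: X] ->
  hausdorff_space X ->
  totally_disconnected [set: X] ->
  is_subgroup mul inv one G ->
  dense G ->
  [pchar k] =i pred0 ->
  @skew_simple X mul inv one k G.
Proof.
move=> tgX cX hX tdX sgG dG _.
have zdX := compact_totally_disconnected_zero_dimensional cX hX tdX.
split.
  move=> /(congr1 (fun a => a one one)); rewrite /skew_one /skew_zero eqxx.
  exact/eqP/oner_neq0.
move=> I idI.
have [I0|/forall2NP I0] := pselect (exists2 a, I a & a <> skew_zero k); [right|left].
  have [t [lt t0 It]] := skew_ideal_monomial1 tgX sgG idI zdX I0.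
  apply: (base_ideal1_full tgX idI); apply: (base_ideal1 tgX sgG idI cX).
  exact: (base_ideal_point tgX sgG idI dG (conj lt It) t0).
apply/seteqP; split=> [a Ia | _ ->]; last by case: idI.
by case: (I0 a) => // /contrapT.
Qed.
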